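(* Consider binary classification with $\mathcal Y=\{-1,+1\}$ and suppose ${\mathbb P}(Y=+1)={\mathbb P}(Y=-1)$. Let $f(v)=\tfrac12|v-1|$ (Total Variation). Then a maximizer $h^*_f\in\arg\max_h D_f(P_{h\times Y}\,\|\,Q_{h\times Y})$, the maximum being over all classifiers $h:\mathcal X\to\{-1,+1\}$, is the Bayes optimal classifier, i.e. $h^*_f\in\arg\max_h {\mathbb P}(h(X)=Y)$.
   Context: $(X,Y)$ is a random pair with features $X\in\mathcal X$ and label $Y\in\{-1,+1\}$. A classifier is a measurable map $h:\mathcal X\to\{-1,+1\}$. $P_{h\times Y}$ denotes the joint distribution of $(h(X),Y)$ on $\{-1,+1\}^2$, i.e. $P_{h\times Y}(y,y')={\mathbb P}(h(X)=y,Y=y')$, and $Q_{h\times Y}$ the product of its marginals, $Q_{h\times Y}(y,y')={\mathbb P}(h(X)=y)\,{\mathbb P}(Y=y')$. For a convex $f$ with $f(1)=0$ and distributions $P,Q$ on a finite set with masses $p,q$, $D_f(P\|Q)=\sum_z q(z) f(p(z)/q(z))$. For $f(v)=\frac12|v-1|$ this is $D_f(P\|Q)=\frac12\sum_z|p(z)-q(z)|$. *)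

From HB Require Import structures.
From mathcomp Require Import all_boot all_order all_algebra.
From mathcomp Require Import all_classical all_reals all_analysis.
Set Implicit Arguments. Unset Strict Implicit. Unset Printing Implicit Defensive.
Import Order.TTheory GRing.Theory Num.Theory.
Local Open Scope classical_set_scope.
Local Open Scope ring_scope.

(* Labels: Y takes values in {-1,+1}, encoded as bool with true = +1, false = -1. *)

Definition Df (R : realType) (f : R -> R) (p q : bool * bool -> R) : R :=
  \sum_(z : bool * bool) q z * f (p z / q z).

Definition ftv (R : realType) (v : R) : R := 2^-1 * `|v - 1|.

Section Joint.
Context (R : realType) (d : measure_display) (Om : measurableType d)
  (Xs : Type) (P : probability Om R) (X : Om -> Xs) (Y : Om -> bool).

Definition PhY (h : Xs -> bool) (z : bool * bool) : R :=
  fine (P [set w | h (X w) = z.1 /\ Y w = z.2]).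

Definition QhY (h : Xs -> bool) (z : bool * bool) : R :=
  fine (P [set w | h (X w) = z.1]) * fine (P [set w | Y w = z.2]).

Definition acc (h : Xs -> bool) : R := fine (P [set w | h (X w) = Y w]).
End Joint.

From HB Require Import structures.
From mathcomp Require Import all_boot all_order all_algebra.
From mathcomp Require Import all_classical all_reals all_analysis.
From mathcomp Require Import ring lra.
Set Implicit Arguments. Unset Strict Implicit. Unset Printing Implicit Defensive.
Import Order.TTheory GRing.Theory Num.Theory.
Local Open Scope classical_set_scope.
Local Open Scope ring_scope.

(** Write [S_h] for the set where [h] predicts [+1] and let
    [nu S = P(X \in S, Y = +1) - P(X \in S, Y = -1)], a signed measure on the
    feature space.  When the labels are balanced, [nu] has total mass [0], the
    total-variation dependence of [h] is [|nu S_h|] and its accuracy is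
    [1/2 + nu S_h].  The positive set [A] of a Hahn decomposition of [nu]
    maximizes [nu], hence also [|nu|] because [nu (~` S) = - nu S]; so the
    indicator of [A], which is the Bayes classifier, maximizes both. *)

Lemma mul_ftv_div (R : realType) (p q : R) : 0 <= q -> (q = 0 -> p = 0) ->
  q * ftv (p / q) = 2^-1 * `|p - q|.
Proof.
move=> q_ge0 q0_p0; have [q0|q_neq0] := eqVneq q 0.
  by rewrite (q0_p0 q0) q0 mul0r subrr normr0 mulr0.
rewrite /ftv mulrCA -[q in q * `|_|]ger0_norm // -normrM.
by rewrite mulrBr mulr1 mulrCA divff // mulr1.
Qed.

Lemma Df_ftv_half_product (R : realType) (p : bool * bool -> R) :
  (forall z, 0 <= p z) -> (forall y, p (true, y) + p (false, y) = 2^-1) ->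
  Df (@ftv R) p (fun z => (p (z.1, true) + p (z.1, false)) * 2^-1) =
  `|p (true, true) - p (true, false)|.
Proof.
move=> p_ge0 p_col.
have p_tt := p_ge0 (true, true); have p_tf := p_ge0 (true, false).
have p_ft := p_ge0 (false, true); have p_ff := p_ge0 (false, false).
have col_t := p_col true; have col_f := p_col false.
have sum_pairs (F : bool * bool -> R) :
    \sum_z F z = F (true, true) + F (true, false) + (F (false, true) + F (false, false)).
  rewrite (eq_bigr (fun z => F (z.1, z.2))); last by case.
  by rewrite -(pair_bigA _ (fun b y => F (b, y))) /= !big_bool.
rewrite /Df sum_pairs /=.
rewrite !mul_ftv_div; try by [lra | move=> ?; lra].
have half_diff (a b : R) : a - (a + b) * 2^-1 = 2^-1 * (a - b) by field.
have half_diff' (a b : R) : b - (a + b) * 2^-1 = - (2^-1 * (a - b)) by field.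
rewrite !half_diff !half_diff' !normrN !normrM ger0_norm ?invr_ge0 ?ler0n //.
have -> : p (false, true) - p (false, false) = - (p (true, true) - p (true, false)).
  by lra.
by rewrite normrN; field.
Qed.

Lemma measurable_preimageT d d' (T : measurableType d) (U : measurableType d')
  (f : T -> U) (B : set U) : measurable_fun setT f -> measurable B ->
  measurable (f @^-1` B).
Proof. by move=> mf mB; rewrite -[_ @^-1` _]setTI; exact: mf. Qed.

Section finite_measure_fine.
Context d (T : measurableType d) (R : realType).
Variable mu : {finite_measure set T -> \bar R}.

Lemma fine_measureU (A B : set T) : measurable A -> measurable B ->
  A `&` B = set0 -> fine (mu (A `|` B)) = fine (mu A) + fine (mu B).
Proof. by move=> mA mB AB0; rewrite measureU // fineD // fin_num_measure. Qed.

Lemma fine_measure_bool_split (g : T -> bool) (A : set T) :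
  measurable_fun setT g -> measurable A ->
  fine (mu A) = fine (mu (A `&` g @^-1` [set true])) +
                fine (mu (A `&` g @^-1` [set false])).
Proof.
move=> mg mA; rewrite -fine_measureU;
  try by apply: measurableI => //; exact: measurable_preimageT.
- congr (fine (mu _)); rewrite -setIUr.
  by apply/esym/setIidPl => x _ /=; case: (g x); [left | right].
- rewrite setIACA; apply/seteqP; split => x //= [_ [gxT gxF]].
  by rewrite gxT in gxF.
Qed.

End finite_measure_fine.

Section charge_argmax.
Context d (T : measurableType d) (R : realType).
Variable nu : {charge set T -> \bar R}.

Lemma charge_argmax :
  exists2 A, measurable A & forall S, measurable S -> (nu S <= nu A)%E.
Proof.
have [A [N [[mA posA] [mN negN] AUN AIN]]] := Hahn_decomposition nu.
exists A => // S mS.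
rewrite (chargeDI _ mS mA) [leRHS](chargeDI _ mA mS) setIC leeD2r//.
apply: (@le_trans _ _ 0%E).
  apply: negN; first exact: measurableD.
  by move=> x [Sx nAx]; have : [set: T] x by []; rewrite -AUN => -[].
by apply: posA; [exact: measurableD | move=> x []].
Qed.

Lemma null_charge_argmax_abs : nu setT = 0%E ->
  exists2 A, measurable A & forall S, measurable S -> `|fine (nu S)| <= fine (nu A).
Proof.
move=> nuT0; have [A mA nuA] := charge_argmax.
exists A => // S mS; have mSC := measurableC mS.
have le_nuA B : measurable B -> fine (nu B) <= fine (nu A).
  by move=> mB; rewrite fine_le ?fin_num_measure //; exact: nuA.
have := congr1 fine nuT0.
rewrite (chargeDI _ measurableT mS) setTD setTI fineD ?fin_num_measure //= => nuSC.
have := le_nuA _ mS; have := le_nuA _ mSC.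
by rewrite ler_norml => *; apply/andP; split; lra.
Qed.

End charge_argmax.

Section balanced_labels.
Context (R : realType) d (Om : measurableType d) d' (Xs : measurableType d').
Variables (P : probability Om R) (X : Om -> Xs) (Y : Om -> bool).
Hypotheses (mX : measurable_fun setT X) (mY : measurable_fun setT Y).
Hypothesis balanced : P [set w | Y w = true] = P [set w | Y w = false].

Let mY_pre y : measurable (Y @^-1` [set y]).
Proof. exact: measurable_preimageT. Qed.

Lemma label_mass_half y : fine (P [set w | Y w = y]) = 2^-1.
Proof.
have total : fine (P [set w | Y w = true]) + fine (P [set w | Y w = false]) = 1.
  have := fine_measure_bool_split P mY measurableT; rewrite !setTI => <-.
  by rewrite -[LHS]/(fine (P setT)) probability_setT.
rewrite balanced in total; case: y; rewrite ?balanced; lra.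
Qed.

Section classifier.
Variables (h : Xs -> bool) (mh : measurable_fun setT h).

Let mhX : measurable_fun setT (h \o X). Proof. exact: measurableT_comp. Qed.

Let mhX_pre b : measurable ((h \o X) @^-1` [set b]).
Proof. exact: measurable_preimageT. Qed.

Lemma PhY_ge0 z : 0 <= PhY P X Y h z.
Proof. exact/fine_ge0/measure_ge0. Qed.

Lemma PhY_label_marginal y : PhY P X Y h (true, y) + PhY P X Y h (false, y) = 2^-1.
Proof.
rewrite -(label_mass_half y) (fine_measure_bool_split P mhX (mY_pre y)).
by rewrite /PhY /= ![Y @^-1` _ `&` _]setIC.
Qed.

Lemma QhY_balanced :
  QhY P X Y h = fun z => (PhY P X Y h (z.1, true) + PhY P X Y h (z.1, false)) * 2^-1.
Proof.
apply/funext => -[b y]; rewrite /QhY label_mass_half /=.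
by rewrite (fine_measure_bool_split P mY (mhX_pre b)).
Qed.

Lemma Df_ftv_balanced :
  Df (@ftv R) (PhY P X Y h) (QhY P X Y h) =
  `|PhY P X Y h (true, true) - PhY P X Y h (true, false)|.
Proof.
rewrite QhY_balanced; apply: Df_ftv_half_product.
- exact: PhY_ge0.
- exact: PhY_label_marginal.
Qed.

Lemma acc_balanced :
  acc P X Y h = 2^-1 + (PhY P X Y h (true, true) - PhY P X Y h (true, false)).
Proof.
rewrite /acc; have -> : [set w | h (X w) = Y w] =
    [set w | h (X w) = true /\ Y w = true] `|` [set w | h (X w) = false /\ Y w = false].
  apply/seteqP; split => w /=; last by case=> -[-> ->].
  by case: (h (X w)) => <-; [left | right].
rewrite fine_measureU; try exact: (measurableI _ _ (mhX_pre _) (mY_pre _)).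
- by have := PhY_label_marginal false; rewrite /PhY /=; lra.
- by apply/seteqP; split => w //= [[-> _] []].
Qed.

End classifier.

Let label_restr y := crestr0 (charge_of_finite_measure P) (mY_pre y).

(* The charge instance of [pushforward] takes [mX] as an argument that
   inference cannot find, hence the definition by [refine]. *)
Definition label_charge : {charge set Xs -> \bar R}.
Proof. by refine (pushforward (cadd (label_restr true) (copp (label_restr false))) X). Defined.

Lemma label_chargeE S : measurable S ->
  label_charge S = (fine (P (X @^-1` S `&` Y @^-1` [set true])) -
                    fine (P (X @^-1` S `&` Y @^-1` [set false])))%:E.
Proof.
move=> mS; have mXS : measurable (X @^-1` S) by exact: measurable_preimageT.
rewrite /label_charge /label_restr /= /pushforward /cadd /= /copp /=.
rewrite /crestr0 !mem_set // /crestr EFinB !fineK ?fin_num_measure //.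
all: exact: measurableI.
Qed.

Lemma label_chargeT : label_charge setT = 0%E.
Proof.
by rewrite label_chargeE // preimage_setT !setTI !label_mass_half subrr.
Qed.

Lemma label_charge_classifier h : measurable_fun setT h ->
  label_charge (h @^-1` [set true]) = (PhY P X Y h (true, true) - PhY P X Y h (true, false))%:E.
Proof.
by move=> mh; rewrite label_chargeE //; exact: measurable_preimageT.
Qed.

End balanced_labels.

Theorem theorem1 (R : realType) (d : measure_display) (Om : measurableType d)
  (d' : measure_display) (Xs : measurableType d')
  (P : probability Om R) (X : Om -> Xs) (Y : Om -> bool)
  (mX : measurable_fun setT X) (mY : measurable_fun setT Y)
  (balanced : P [set w | Y w = true] = P [set w | Y w = false]) :
  exists hstar : Xs -> bool,
    [/\ measurable_fun setT hstar,
        (forall h : Xs -> bool, measurable_fun setT h ->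
           Df (@ftv R) (PhY P X Y h) (QhY P X Y h)
             <= Df (@ftv R) (PhY P X Y hstar) (QhY P X Y hstar))
      & (forall h : Xs -> bool, measurable_fun setT h ->
           acc P X Y h <= acc P X Y hstar)].
Proof.
have [A mA maxA] := null_charge_argmax_abs (label_chargeT mX mY balanced).
pose hstar x := `[< A x >].
have hstarA : hstar @^-1` [set true] = A.
  by apply/seteqP; split => x /=; rewrite /hstar => /asboolP.
have mhstar : measurable_fun setT hstar.
  by apply: (measurable_fun_bool true); rewrite setTI hstarA.
have le_hstar h : measurable_fun setT h ->
    `|PhY P X Y h (true, true) - PhY P X Y h (true, false)|
      <= PhY P X Y hstar (true, true) - PhY P X Y hstar (true, false).
  move=> mh; have mS : measurable (h @^-1` [set true]) by exact: measurable_preimageT.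
  by have := maxA _ mS; rewrite -hstarA !label_charge_classifier.
exists hstar; split => // h mh.
- rewrite !Df_ftv_balanced //; apply: le_trans (le_hstar _ mh) _; exact: ler_norm.
- rewrite !acc_balanced // lerD2l; apply: le_trans (le_hstar _ mh); exact: ler_norm.
Qed.
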